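(* Let $(G,I,O)$ be a geometry with a flow $(f,\preceq)$, and let $P_h=v_1\to\cdots\to v_{r}$ and $P_j=w_1\to\cdots\to w_{s}$ be two distinct paths of the path cover $\mathcal P_f$ (whose arcs are exactly the arcs $v\to f(v)$, $v\in O^c$). If $v_aw_b\in E(G)$ and $v_cw_d\in E(G)$ with $a<c$, then $b\le d$.
   Context: Graphs are finite, simple, undirected, without self-loops; $v\sim w$ denotes adjacency. A geometry is $(G,I,O)$ with $I,O\subseteq V(G)$; $O^c=V(G)\setminus O$, $I^c=V(G)\setminus I$. A flow for $(G,I,O)$ is a pair $(f,\preceq)$, $f:O^c\to I^c$, $\preceq$ a partial order on $V(G)$, with, for all $v\in O^c$, $w\in V(G)$: $v\sim f(v)$; $v\preceq f(v)$; $w\sim f(v)\Rightarrow v\preceq w$. For a flow, $f$ is injective and the arcs $v\to f(v)$ ($v\in O^c$) form a family $\mathcal P_f$ of vertex-disjoint directed paths covering $V(G)$, each ending in $O$. *)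

From mathcomp Require Import all_boot.
Set Implicit Arguments. Unset Strict Implicit. Unset Printing Implicit Defensive.

Definition simple_graph (T : finType) (e : rel T) : Prop :=
  symmetric e /\ irreflexive e.

Definition partial_order (T : finType) (le : rel T) : Prop :=
  reflexive le /\ antisymmetric le /\ transitive le.

(* (f, le) is a flow for the geometry (G, I, O).  f is a total function T -> T
   but only its values on O^c matter (f : O^c -> I^c). *)
Definition is_flow (T : finType) (e : rel T) (I O : {set T}) (f : T -> T)
    (le : rel T) : Prop :=
  partial_order le /\
  forall v, v \notin O ->
    [/\ f v \notin I, e v (f v), le v (f v) & forall w, e w (f v) -> le v w].

(* p = [v_1; ...; v_r] is one of the paths of the path cover P_f, i.e. a maximal
   directed path of arcs v -> f v (v in O^c): it is nonempty, consecutive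
   vertices are joined by arcs, it ends in O, and its first vertex has no
   incoming arc. *)
Definition flow_path (T : finType) (O : {set T}) (f : T -> T) (p : seq T) : Prop :=
  [/\ p != [::],
      forall i x0, i.+1 < size p -> nth x0 p i \notin O /\ f (nth x0 p i) = nth x0 p i.+1,
      forall x0, last x0 p \in O
    & forall x0 v, v \notin O -> f v != head x0 p].

From mathcomp Require Import all_boot.

Set Implicit Arguments.
Unset Strict Implicit.
Unset Printing Implicit Defensive.

(* Suppose d < b.  Then b > 0 and c > 0, so w_b = f(w_{b-1}) and
   v_c = f(v_{c-1}).  The flow condition "u ~ f(v) implies v <= u" applied to
   the edges v_a w_b and w_d v_c gives w_{b-1} <= v_a and v_{c-1} <= w_d, while
   the order increases along every path of the cover, so v_a <= v_{c-1} and
   w_d <= w_{b-1}.  Hence w_{b-1} <= v_a <= v_{c-1} <= w_d <= w_{b-1}, and by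
   antisymmetry v_a = w_{b-1}: the two paths share a vertex.  But paths of the
   cover are vertex-disjoint, contradicting p != q. *)

Section FlowPathCover.

Variables (T : finType) (e : rel T) (I O : {set T}) (f : T -> T) (le : rel T).
Hypothesis flow : is_flow e I O f le.

(* f is injective on O^c: both preimages of f v precede each other. *)
Lemma flow_inj v w : v \notin O -> w \notin O -> f v = f w -> v = w.
Proof.
case: flow => [[_ [le_anti _]] Hf] vO wO fvw.
have [_ e_vfv _ le_v] := Hf v vO.
have [_ e_wfw _ le_w] := Hf w wO.
apply: le_anti; apply/andP; split.
- by apply: le_v; rewrite fvw.
- by apply: le_w; rewrite -fvw.
Qed.

Lemma flow_le_nbr_succ v w : v \notin O -> e w (f v) -> le v w.
Proof. by case: flow => _ Hf vO; have [_ _ _] := Hf v vO; apply. Qed.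

Lemma flow_path_le p x0 i j : flow_path O f p -> i <= j -> j < size p ->
  le (nth x0 p i) (nth x0 p j).
Proof.
case: flow => [[le_refl [_ le_trans]] Hf] [_ Pp _ _].
elim: j => [|j IH]; first by rewrite leqn0 => /eqP -> _; apply: le_refl.
rewrite leq_eqVlt => /orP [/eqP -> _|]; first exact: le_refl.
rewrite ltnS => ij jp.
have [jO <-] := Pp j x0 jp.
apply: le_trans (IH ij (ltnW jp)) _.
by have [] := Hf _ jO.
Qed.

Lemma flow_path_nth p x0 i : flow_path O f p -> i < size p ->
  nth x0 p i = iter i f (head x0 p).
Proof.
case=> _ Pp _ _; elim: i => [|i IH] ip; first exact: nth0.
by have [_ <-] := Pp i x0 ip; rewrite iterS -IH // ltnW.
Qed.

(* Two cover paths through a common vertex start at the same vertex: step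
   back along both using injectivity, and a first vertex has no predecessor. *)
Lemma flow_path_head_eq p q x0 i j : flow_path O f p -> flow_path O f q ->
  i < size p -> j < size q -> nth x0 p i = nth x0 q j -> head x0 p = head x0 q.
Proof.
move=> [_ Pp _ Hp] [_ Pq _ Hq]; rewrite -!nth0.
elim: i j => [|i IH] [|j] //= ip jq E.
- have [jO fE] := Pq j x0 jq.
  by move: (Hp x0 _ jO); rewrite fE -E nth0 eqxx.
- have [iO fE] := Pp i x0 ip.
  by move: (Hq x0 _ iO); rewrite fE E nth0 eqxx.
- have [iO fEp] := Pp i x0 ip; have [jO fEq] := Pq j x0 jq.
  apply: IH (ltnW ip) (ltnW jq) _.
  by apply: flow_inj => //; rewrite fEp fEq.
Qed.

(* Cover paths with the same first vertex have the same length: the last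
   vertex is in O, whereas every earlier vertex is not. *)
Lemma flow_path_size p q x0 : flow_path O f p -> flow_path O f q ->
  head x0 p = head x0 q -> size p = size q.
Proof.
wlog le_pq : p q / size p <= size q.
  by move=> H fp fq hpq; case/orP: (leq_total (size p) (size q)) => ?;
    [apply: H | symmetry; apply: H].
move=> fp fq hpq; apply/eqP; rewrite eqn_leq le_pq leqNgt; apply/negP=> lt_pq.
have [pn _ Lp _] := fp; have [_ Pq _ _] := fq.
have sp_pos : 0 < size p by case: p pn {fp hpq le_pq lt_pq Lp}.
have kp : (size p).-1 < size p by rewrite prednK.
have kq : (size p).-1.+1 < size q by rewrite prednK.
have [kO _] := Pq _ x0 kq.
move: (Lp x0); rewrite -nth_last (flow_path_nth x0 fp kp) hpq.
by rewrite -(flow_path_nth x0 fq (ltnW kq)) (negbTE kO).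
Qed.

Lemma flow_path_eq p q x0 i j : flow_path O f p -> flow_path O f q ->
  i < size p -> j < size q -> nth x0 p i = nth x0 q j -> p = q.
Proof.
move=> fp fq ip jq Eij.
have hpq := flow_path_head_eq fp fq ip jq Eij.
have spq := flow_path_size fp fq hpq.
apply: (eq_from_nth (x0 := x0) spq) => k kp.
by rewrite (flow_path_nth x0 fp kp) (flow_path_nth x0 fq) -?spq // hpq.
Qed.

End FlowPathCover.

Theorem mainTheorem7 (T : finType) (e : rel T) (I O : {set T})
    (f : T -> T) (le : rel T) (p q : seq T) (x0 : T) (a b c d : nat) :
  simple_graph e ->
  is_flow e I O f le ->
  flow_path O f p -> flow_path O f q -> p != q ->
  a < size p -> c < size p -> b < size q -> d < size q ->
  e (nth x0 p a) (nth x0 q b) -> e (nth x0 p c) (nth x0 q d) ->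
  a < c -> b <= d.
Proof.
move=> [e_sym _] flow fp fq /eqP pq ap cp bq dq e_ab e_cd ac.
rewrite leqNgt; apply/negP=> db.
(* Now b = b'.+1 and c = c'.+1, so w_b and v_c are images under f. *)
case: b bq e_ab db => // b bq e_ab; rewrite ltnS => db.
case: c cp e_cd ac => // c cp e_cd; rewrite ltnS => ac.
have [[_ [le_anti le_trans]] _] := flow.
have [_ Pp _ _] := fp; have [_ Pq _ _] := fq.
have [bO fb] := Pq b x0 bq; have [cO fc] := Pp c x0 cp.
have wb_va : le (nth x0 q b) (nth x0 p a).
  by apply: (flow_le_nbr_succ flow bO); rewrite fb.
have vc_wd : le (nth x0 p c) (nth x0 q d).
  by apply: (flow_le_nbr_succ flow cO); rewrite fc e_sym.
have va_vc := flow_path_le flow x0 fp ac (ltnW cp).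
have wd_wb := flow_path_le flow x0 fq db (ltnW bq).
have shared : nth x0 p a = nth x0 q b.
  by apply: le_anti; rewrite wb_va andbT (le_trans _ _ _ (le_trans _ _ _ va_vc vc_wd)).
exact: pq (flow_path_eq flow fp fq ap (ltnW bq) shared).
Qed.
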